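(* Consider the online multiple testing protocol described in the context, and a deterministic online testing algorithm with worst-case threshold sequence $(\tilde\lambda_t)_{t\ge1}$ satisfying $\sum_{t=1}^\infty\tilde\lambda_t\le C<1$. Assume $G(x)\le Lx$ for all $x\in[0,1]$ for some constant $L\ge1$. For an even integer $T\ge2$, let the environment be the deterministic two-phase sequence $Y_t=0$ for $1\le t\le T/2$ and $Y_t=1$ for $T/2<t\le T$. Then for all sufficiently large $T$ and all $a,b>0$, $$\mathbb{E}[\mathrm{Regret}_T(a,b)]\ \ge\ b\cdot\frac T2\left[(1-C)\prod_{t=T/2+1}^{\infty}\big(1-L\tilde\lambda_t\big)_+\right]=\Omega(T),$$ where $(x)_+=\max(x,0)$.
   Context: Online multiple testing protocol: at each round $t$ the environment has a true state $Y_t\in\{0,1\}$ and reveals a $p$-value $p_t\in[0,1]$; conditionally on the states and the past, $p_t\sim\mathrm{Uniform}[0,1]$ if $Y_t=0$ and $p_t\sim G$ if $Y_t=1$, independently across rounds, where $G$ is a continuous strictly increasing CDF on $[0,1]$ with $G(0)=0$, $G(1)=1$. The algorithm picks a threshold $\lambda_t\in[0,1]$ that is a deterministic function of the past history $(p_s,\lambda_s,\delta_s)_{s\le t-1}$ and decides $\delta_t=\mathbf{1}\{p_t\le\lambda_t\}$. The worst-case threshold sequence $\tilde\lambda_t$ is the threshold the algorithm uses at round $t$ when exactly zero rejections have occurred in rounds $1,\dots,t-1$ (so as long as no rejection has been made, $\lambda_t=\tilde\lambda_t$). $V_T=\sum_{t\le T}\mathbf{1}\{Y_t=0,\delta_t=1\}$,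 $M_T=\sum_{t\le T}\mathbf{1}\{Y_t=1,\delta_t=0\}$, and for $a,b>0$, $\mathrm{Regret}_T(a,b)=aV_T+bM_T$. *)

From HB Require Import structures.
From mathcomp Require Import all_boot all_order all_algebra.
From mathcomp Require Import all_classical all_reals all_analysis.
Set Implicit Arguments. Unset Strict Implicit. Unset Printing Implicit Defensive.
Import Order.TTheory GRing.Theory Num.Theory.
Import numFieldNormedType.Exports.
Local Open Scope ring_scope.

Section Online.
Variable R : realType.

(* One round of history: (p_s, lambda_s, delta_s). *)
Definition round := (R * R * bool)%type.

(* A deterministic online algorithm: at round t (t >= 1) it receives the
   history of rounds 1..t-1 (a list of length t-1) and returns lambda_t. *)
Definition algorithm := nat -> seq round -> R.

Fixpoint history (alg : algorithm) (ps : nat -> R) (n : nat) : seq round :=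
  match n with
  | 0 => [::]
  | n'.+1 =>
      let h := history alg ps n' in
      let l := alg n'.+1 h in
      rcons h (ps n'.+1, l, ps n'.+1 <= l)
  end.

Definition lam (alg : algorithm) (ps : nat -> R) (t : nat) : R :=
  alg t (history alg ps t.-1).
Definition delta (alg : algorithm) (ps : nat -> R) (t : nat) : bool :=
  ps t <= lam alg ps t.

(* Y : nat -> bool, true means state 1 (alternative), false means null *)
Definition V_T (alg : algorithm) (Y : nat -> bool) (ps : nat -> R) (T : nat) : nat :=
  \sum_(1 <= t < T.+1) ((~~ Y t) && delta alg ps t).
Definition M_T (alg : algorithm) (Y : nat -> bool) (ps : nat -> R) (T : nat) : nat :=
  \sum_(1 <= t < T.+1) (Y t && ~~ delta alg ps t).
Definition regret (alg : algorithm) (Y : nat -> bool) (ps : nat -> R) (T : nat)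
  (a b : R) : R :=
  a * (V_T alg Y ps T)%:R + b * (M_T alg Y ps T)%:R.

Definition two_phase (T : nat) (t : nat) : bool := (T %/ 2 < t)%N.

Definition worst_case_thresholds (alg : algorithm) (lt : nat -> R) : Prop :=
  forall ps : nat -> R, (forall s, 0 <= ps s <= 1) ->
  forall t, (1 <= t)%N -> (forall s, (1 <= s < t)%N -> ~~ delta alg ps s) ->
  lam alg ps t = lt t.

(* infinite product prod_{t >= m} (1 - L lt_t)_+ , limit of partial products
   (nonincreasing sequence in [0,1], hence convergent) *)
Definition tail_prod (L : R) (lt : nat -> R) (m : nat) : R :=
  limn (fun n : nat => (\prod_(m <= t < n) Num.max (1 - L * lt t) 0 : R)).

End Online.

(* The probabilistic model for horizon T with deterministic states Y:
   p_1, p_2, ... are independent random variables on (Omega, P),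
   p_t ~ Uniform[0,1] if Y_t = 0 and p_t ~ G if Y_t = 1. *)
Definition pvalue_model (R : realType) (d : measure_display) (Omega : measurableType d)
  (P : probability Omega R) (p : nat -> Omega -> R) (G : R -> R) (Y : nat -> bool) : Prop :=
  [/\ (forall t, measurable_fun setT (p t)),
      (forall n (A : nat -> set R), (forall t, measurable (A t)) ->
         P (\bigcap_(t in [set s : nat | (1 <= s <= n)%N]) (p t @^-1` A t))%classic =
         (\prod_(1 <= t < n.+1) P (p t @^-1` A t)%classic)%E),
      (forall t, (1 <= t)%N -> ~~ Y t -> forall x, 0 <= x <= 1 ->
         P [set w : Omega | p t w <= x]%classic = x%:E) &
      (forall t, (1 <= t)%N -> Y t -> forall x, 0 <= x <= 1 ->
         P [set w : Omega | p t w <= x]%classic = (G x)%:E)].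

(* If every p-value lies above its worst-case threshold, the algorithm never
   rejects (its thresholds are then exactly the worst-case ones), so it misses
   all T/2 alternatives and its regret is at least b T/2.  By independence this
   event has probability prod_(t <= T/2) (1 - lt_t) * prod_(T/2 < t <= T) (1 - G lt_t),
   which the Weierstrass inequality 1 - sum x_t <= prod (1 - x_t)_+ bounds below
   by (1 - C) prod_(t > T/2) (1 - L lt_t)_+.  The tails of the convergent series
   sum lt_t tend to 0, so the same inequality makes this infinite product at
   least 1/2 for large T, whence the bound is linear in T. *)
From HB Require Import structures.
From mathcomp Require Import all_boot all_order all_algebra.
From mathcomp Require Import all_classical all_reals all_analysis.
From mathcomp Require Import lra.
Set Implicit Arguments.
Unset Strict Implicit.
Unset Printing Implicit Defensive.
Import Order.TTheory GRing.Theory Num.Theory.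
Import numFieldNormedType.Exports.
Local Open Scope classical_set_scope.
Local Open Scope ring_scope.

Section online_algorithm.
Variables (R : realType) (alg : algorithm R).
Implicit Types (ps lt : nat -> R) (a b : R).

Lemma eq_history ps ps' n : {in [pred s | 1 <= s <= n]%N, ps =1 ps'} ->
  history alg ps n = history alg ps' n.
Proof.
elim: n => [//|n IHn] eq_ps /=.
have eq_n : {in [pred s | 1 <= s <= n]%N, ps =1 ps'}.
  by move=> s /andP[s1 sn]; apply: eq_ps; rewrite inE s1 ltnW.
by rewrite IHn // eq_ps // inE /= leqnn.
Qed.

Lemma eq_delta ps ps' t : (0 < t)%N -> {in [pred s | 1 <= s <= t]%N, ps =1 ps'} ->
  delta alg ps t = delta alg ps' t.
Proof.
case: t => // t _ eq_ps.
have eq_t : {in [pred s | 1 <= s <= t]%N, ps =1 ps'}.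
  by move=> s /andP[s1 st]; apply: eq_ps; rewrite inE s1 ltnW.
by rewrite /delta /lam /= (eq_history eq_t) eq_ps // inE /= leqnn.
Qed.

Lemma above_thresholds_no_rejection lt ps T :
  worst_case_thresholds alg lt -> (forall t, 0 <= lt t) ->
  (forall t, (1 <= t <= T)%N -> lt t < ps t <= 1) ->
  forall t, (1 <= t <= T)%N -> ~~ delta alg ps t.
Proof.
move=> wct lt0 above.
pose ps' s := if (1 <= s <= T)%N then ps s else 1.
have ps'01 s : 0 <= ps' s <= 1.
  rewrite /ps'; case: ifP => [/above /andP[lt_ps ->]|_]; last by rewrite ler01 lexx.
  by rewrite (le_trans (lt0 s) (ltW lt_ps)).
suff no_rej' t : (1 <= t <= T)%N -> ~~ delta alg ps' t.
  move=> t tT; case/andP: (tT) => t1 tT'.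
  rewrite (@eq_delta ps ps') ?no_rej' // => s /andP[s1 st].
  by rewrite /ps' s1 (leq_trans st tT').
elim/ltn_ind: t => t IHt /andP[t1 tT].
have lam_t : lam alg ps' t = lt t.
  by apply: wct => // s /andP[s1 st]; apply: IHt; rewrite // s1 (leq_trans (ltnW st)).
have /andP[lt_ps _] : lt t < ps t <= 1 by apply: above; rewrite t1 tT.
by rewrite /delta lam_t -ltNge /ps' t1 tT.
Qed.

Lemma M_T_two_phase_no_rejection ps T :
  (forall t, (1 <= t <= T)%N -> ~~ delta alg ps t) ->
  M_T alg (two_phase T) ps T = (T - T %/ 2)%N.
Proof.
move=> no_rej; rewrite /M_T (@big_cat_nat _ _ _ (T %/ 2).+1) //=; last first.
  by rewrite ltnS leq_div.
rewrite big_nat_cond big1 ?add0n => [|t /andP[/andP[_ t_le] _]]; last first.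
  by rewrite /two_phase ltnNge -ltnS t_le.
rewrite (eq_big_nat _ _ (F2 := fun=> 1%N)) ?sum_nat_const_nat ?muln1 ?subSS //.
move=> t /andP[t_gt t_le]; rewrite /two_phase t_gt no_rej //.
by rewrite (leq_trans _ t_gt) //= -ltnS.
Qed.

Lemma regret_ge_missed Y ps T a b : 0 <= a ->
  b * (M_T alg Y ps T)%:R <= regret alg Y ps T a b.
Proof. by move=> a0; rewrite /regret lerDr mulr_ge0. Qed.

Lemma regret_ge0 Y ps T a b : 0 <= a -> 0 <= b -> 0 <= regret alg Y ps T a b.
Proof. by move=> a0 b0; rewrite /regret addr_ge0 ?mulr_ge0. Qed.

Lemma regret_above_thresholds lt ps T a b :
  worst_case_thresholds alg lt -> (forall t, 0 <= lt t) -> 0 <= a ->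
  (forall t, (1 <= t <= T)%N -> lt t < ps t <= 1) ->
  b * (T - T %/ 2)%:R <= regret alg (two_phase T) ps T a b.
Proof.
move=> wct lt0 a0 above.
rewrite -(@M_T_two_phase_no_rejection ps) ?regret_ge_missed //.
exact: above_thresholds_no_rejection wct lt0 above.
Qed.

End online_algorithm.

Lemma max_1_sub_ge0_le1 (R : realDomainType) (x : R) :
  0 <= x -> 0 <= Num.max (1 - x) 0 <= 1.
Proof. by move=> x0; rewrite le_max lexx orbT ge_max /= ler01 gerBl x0. Qed.

Lemma one_sub_sum_le_prod (R : realDomainType) (I : Type) (r : seq I) (x : I -> R) :
  (forall i, 0 <= x i) ->
  1 - \sum_(i <- r) x i <= \prod_(i <- r) Num.max (1 - x i) 0.
Proof.
move=> x0; elim: r => [|i r IHr]; first by rewrite !big_nil subr0.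
rewrite !big_cons; set S := \sum_(j <- r) x j in IHr *; set P := \prod_(j <- r) _ in IHr *.
have S0 : 0 <= S by rewrite sumr_ge0.
have P01 : 0 <= P <= 1.
  rewrite /P; apply/andP; split; [apply: prodr_ge0 | apply: prodr_ile1] => j _.
    by case/andP: (max_1_sub_ge0_le1 (x0 j)).
  exact: max_1_sub_ge0_le1.
have xi0 := x0 i; case: (leP (x i) 1) => xi1.
  have : 0 <= x i * (1 - P) by rewrite mulr_ge0 // subr_ge0; case/andP: P01.
  by rewrite max_l ?subr_ge0 //; lra.
by rewrite max_r ?subr_le0 ?ltW // mul0r; lra.
Qed.

Lemma prod_ge0_le1_nonincreasing (R : numDomainType) (f : nat -> R) m :
  (forall t, 0 <= f t <= 1) -> nonincreasing_seq (fun n => \prod_(m <= t < n) f t).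
Proof.
move=> f01 n k nk; have [mn|nm] := leqP m n; last first.
  by rewrite [leRHS]big_geq 1?ltnW // prodr_ile1.
rewrite (@big_cat_nat _ _ _ n m k) //= ler_piMr ?prodr_ge0 ?prodr_ile1 //.
by move=> t _; case/andP: (f01 t).
Qed.

Section tail_prod.
Variables (R : realType) (L : R) (lt : nat -> R).
Hypotheses (L0 : 0 <= L) (lt0 : forall t, 0 <= lt t).

Let factor01 t : 0 <= Num.max (1 - L * lt t) 0 <= 1.
Proof. exact/max_1_sub_ge0_le1/mulr_ge0. Qed.

Let partial_nonincreasing m :
  nonincreasing_seq (fun n => \prod_(m <= t < n) Num.max (1 - L * lt t) 0).
Proof. exact: prod_ge0_le1_nonincreasing. Qed.

Let partial_cvg m : cvgn (fun n => \prod_(m <= t < n) Num.max (1 - L * lt t) 0).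
Proof.
apply: nonincreasing_is_cvgn => //; exists 0 => _ [n _ <-].
by rewrite prodr_ge0 // => t _; case/andP: (factor01 t).
Qed.

Lemma tail_prod_le_partial m n :
  tail_prod L lt m <= \prod_(m <= t < n) Num.max (1 - L * lt t) 0.
Proof. exact: nonincreasing_cvgn_ge. Qed.

Lemma tail_prod_ge0 m : 0 <= tail_prod L lt m.
Proof.
apply: limr_ge => //; apply: nearW => n.
by rewrite prodr_ge0 // => t _; case/andP: (factor01 t).
Qed.

Lemma tail_prod_ge_tail_sum m e : (\sum_(m <= t <oo) (lt t)%:E <= e%:E)%E ->
  1 - L * e <= tail_prod L lt m.
Proof.
move=> tail_e; apply: limr_ge => //; apply: nearW => n /=.
apply: le_trans (one_sub_sum_le_prod _ _) => [|t]; last exact: mulr_ge0.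
rewrite lerD2l lerN2 -mulr_sumr ler_wpM2l //.
rewrite -lee_fin -sumEFin (le_trans _ tail_e) //.
by apply: nneseries_lim_ge => t _ _; rewrite lee_fin.
Qed.

End tail_prod.

Lemma nneseries_tail_le (R : realType) (u : nat -> R) (C e : R) :
  (forall t, 0 <= u t) -> (\sum_(1 <= t <oo) (u t)%:E <= C%:E)%E -> 0 < e ->
  \forall m \near \oo, (\sum_(m <= t <oo) (u t)%:E <= e%:E)%E.
Proof.
move=> u0 sum_C e0.
have sum_fin : (\sum_(0 <= t <oo) (u t)%:E < +oo)%E.
  rewrite nneseries_recl // => [|t _]; last by rewrite lee_fin.
  by rewrite (le_lt_trans (leeD2l _ sum_C)) // -EFinD ltry.
have /fine_cvgP[tail_fin /cvgr_lt tail_lt] := nneseries_tail_cvg sum_fin (fun t _ => u0 t).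
near=> m; rewrite -(fineK (near tail_fin m _)) // lee_fin ltW //.
by near: m; exact: tail_lt.
Unshelve. all: by end_near.
Qed.

Lemma tail_prod_ge_half (R : realType) (L C : R) (lt : nat -> R) :
  0 < L -> (forall t, 0 <= lt t) -> (\sum_(1 <= t <oo) (lt t)%:E <= C%:E)%E ->
  \forall m \near \oo, 1 / 2 <= tail_prod L lt m.
Proof.
move=> L0 lt0 sum_C.
have e0 : 0 < (2 * L)^-1 by rewrite invr_gt0 mulr_gt0.
apply: filterS (nneseries_tail_le lt0 sum_C e0) => m /(tail_prod_ge_tail_sum (ltW L0) lt0).
by apply: le_trans; rewrite invfM mulrCA mulfV ?gt_eqF // mulr1; lra.
Qed.

Section integral_lower_bound.
Variables (d : measure_display) (T : measurableType d) (R : realType).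
Variable mu : {measure set T -> \bar R}.

(* No measurability is needed: the integral of a nonnegative function is the
   supremum of the integrals of the simple functions below it. *)
Lemma ge0_le_integralT_nonmeasurable (f g : T -> R) :
  (forall x, 0 <= f x) -> (forall x, f x <= g x) ->
  (\int[mu]_x (f x)%:E <= \int[mu]_x (g x)%:E)%E.
Proof.
move=> f0 fg; rewrite !ge0_integralTE => [|x|x]; rewrite ?lee_fin ?(le_trans (f0 x)) //.
apply: ereal_sup_le => _ [h hf <-]; exists h => //= x.
by rewrite (le_trans (hf x)) ?lee_fin.
Qed.

Lemma mul_measure_le_integral (f : T -> R) (E : set T) (k : R) :
  measurable E -> 0 <= k -> (forall x, 0 <= f x) -> (forall x, E x -> k <= f x) ->
  (k%:E * mu E <= \int[mu]_x (f x)%:E)%E.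
Proof.
move=> mE k0 f0 fk; rewrite -(setIT E) -integral_indic //.
rewrite -(integralZl_indic _ (fun=> E)) // => [|k_lt0]; last first.
  by move: k0; rewrite leNgt k_lt0.
apply: ge0_le_integralT_nonmeasurable => x; rewrite indicE.
  by case: (x \in E); rewrite ?mulr1 ?mulr0.
by case: (boolP (x \in E)) => [/set_mem/fk|_]; rewrite ?mulr1 ?mulr0.
Qed.

End integral_lower_bound.

Section pvalues.
Variables (R : realType) (d : measure_display) (Omega : measurableType d).
Variable P : probability Omega R.

Lemma probability_itv_oc_cdf (q : Omega -> R) (F : R -> R) (x : R) :
  measurable_fun setT q -> F 1 = 1 ->
  (forall y, 0 <= y <= 1 -> P [set w | q w <= y] = (F y)%:E) ->
  0 <= x <= 1 -> P (q @^-1` `]x, 1]) = (1 - F x)%:E.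
Proof.
move=> mq F1 cdf /andP[x0 x1].
have mle y : measurable [set w | q w <= y].
  rewrite (_ : [set w | q w <= y] = q @^-1` `]-oo, y]).
    by rewrite -[_ @^-1` _]setTI; exact: mq.
  by apply/seteqP; split => w /=; rewrite in_itv.
have -> : q @^-1` `]x, 1] = [set w | q w <= 1] `\` [set w | q w <= x].
  apply/seteqP; split => w /=; rewrite in_itv /= ltNge.
    by case/andP => /negP.
  by case=> -> /negP ->.
rewrite measureD ?(le_lt_trans (probability_le1 _ _)) ?ltry //.
rewrite (_ : _ `&` _ = [set w | q w <= x]); last first.
  by apply/seteqP; split => [w []//|w /= qx]; split => //; apply: le_trans x1.
have cdf1 : P [set w | q w <= 1] = 1%:E by rewrite cdf ?ler01 ?lexx ?F1.
have cdfx : P [set w | q w <= x] = (F x)%:E by rewrite cdf ?x0 ?x1.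
by rewrite EFinB -cdf1 -cdfx.
Qed.

Definition above_thresholds (p : nat -> Omega -> R) (lt : nat -> R) (T : nat) :=
  \bigcap_(t in [set s | (1 <= s <= T)%N]) (p t @^-1` `]lt t, 1]).

Lemma measurable_above_thresholds p lt T : (forall t, measurable_fun setT (p t)) ->
  measurable (above_thresholds p lt T).
Proof.
move=> mp; apply: bigcap_measurableType => t _.
by rewrite -[_ @^-1` _]setTI; exact: mp.
Qed.

Lemma probability_above_thresholds_ge (p : nat -> Omega -> R) (G : R -> R)
    (lt : nat -> R) (C L : R) (T : nat) :
  pvalue_model P p G (two_phase T) -> G 1 = 1 ->
  (forall x, 0 <= x <= 1 -> G x <= L * x) -> 0 <= L ->
  (forall t, 0 <= lt t <= 1) -> (\sum_(1 <= t <oo) (lt t)%:E <= C%:E)%E -> C <= 1 ->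
  (((1 - C) * tail_prod L lt (T %/ 2).+1)%:E <= P (above_thresholds p lt T))%E.
Proof.
case=> mp indep null alt G1 GL L0 lt01 sum_C C1.
have lt0 t : 0 <= lt t by case/andP: (lt01 t).
pose q t := 1 - (if two_phase T t then G (lt t) else lt t).
have Pq t : (1 <= t)%N -> P (p t @^-1` `]lt t, 1]) = (q t)%:E.
  move=> t1; rewrite /q; case: ifPn => Yt.
    by apply: probability_itv_oc_cdf => //; exact: alt.
  by apply: (probability_itv_oc_cdf (F := id)) => //; exact: null.
have q_ge t : (1 <= t)%N ->
    0 <= Num.max (1 - (if two_phase T t then L else 1) * lt t) 0 <= q t.
  move=> t1; have q0 : 0 <= q t by rewrite -lee_fin -Pq.
  rewrite le_max lexx orbT ge_max q0 andbT /q.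
  by case: ifP => _; rewrite /= lerD2l lerN2 ?mul1r // GL.
rewrite /above_thresholds (indep T (fun t => `]lt t, 1]%classic)) => [|t]; last first.
  exact: measurable_itv.
rewrite (eq_big_nat _ _ (F2 := fun t => (q t)%:E)) => [|t /andP[t1 _]]; last exact: Pq.
rewrite prodEFin lee_fin (@big_cat_nat _ _ _ (T %/ 2).+1) //= ?ltnS ?leq_div //.
apply: ler_pM; [by rewrite subr_ge0 | exact: tail_prod_ge0 | |].
- apply: (@le_trans _ _ (1 - \sum_(1 <= t < (T %/ 2).+1) lt t)).
    rewrite lerD2l lerN2 -lee_fin -sumEFin (le_trans _ sum_C) //.
    by apply: nneseries_lim_ge => t _ _; rewrite lee_fin.
  apply: le_trans (one_sub_sum_le_prod _ lt0) _.
  rewrite big_nat_cond [leRHS]big_nat_cond; apply: ler_prod => t /andP[/andP[t1 tm] _].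
  by have := q_ge t t1; rewrite /two_phase ltnNge -ltnS tm mul1r.
- apply: le_trans (tail_prod_le_partial L0 lt0 _ T.+1) _.
  rewrite big_nat_cond [leRHS]big_nat_cond; apply: ler_prod => t /andP[/andP[tm _] _].
  by have := q_ge t (leq_trans (ltn0Sn _) tm); rewrite /two_phase tm.
Qed.

End pvalues.

Theorem theorem2 (R : realType) (alg : algorithm R) (lt : nat -> R) (C L : R)
  (G : R -> R) :
  (forall t h, 0 <= alg t h <= 1) ->
  worst_case_thresholds alg lt ->
  (forall t, 0 <= lt t <= 1) ->
  (\sum_(1 <= t <oo) (lt t)%:E <= C%:E)%E ->
  C < 1 ->
  {within `[0, 1], continuous G} ->
  {in `[0, 1] &, forall x y, x < y -> G x < G y} ->
  G 0 = 0 -> G 1 = 1 ->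
  1 <= L ->
  (forall x, 0 <= x <= 1 -> G x <= L * x) ->
  exists c : R, 0 < c /\
  exists T0 : nat, forall T : nat, (T0 <= T)%N -> (2 <= T)%N -> ~~ odd T ->
  forall (d : measure_display) (Omega : measurableType d)
         (P : probability Omega R) (p : nat -> Omega -> R),
  pvalue_model P p G (two_phase T) ->
  forall a b : R, 0 < a -> 0 < b ->
  let bound := b * (T%:R / 2) * ((1 - C) * tail_prod L lt (T %/ 2).+1) in
  (bound%:E <= \int[P]_w (regret alg (two_phase T) (fun t => p t w) T a b)%:E)%E
  /\ c * b * T%:R <= bound.
Proof.
move=> _ wct lt01 sum_C C1 _ _ _ G1 L1 GL.
have L0 : 0 < L := lt_le_trans ltr01 L1.
have lt0 t : 0 <= lt t by case/andP: (lt01 t).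
have [m0 _ tail_half] := tail_prod_ge_half L0 lt0 sum_C.
exists ((1 - C) / 4); split; first by rewrite divr_gt0 // subr_gt0.
exists (2 * m0)%N => T T0 _ Teven d Omega P p model a b a0 b0 bound.
have T_2 : (T %/ 2 * 2)%N = T by rewrite divnK // dvdn2.
have half_T : T%:R / 2 = (T - T %/ 2)%:R :> R.
  by rewrite -{2}T_2 muln2 -addnn addnK -{1}T_2 natrM mulfK ?pnatr_eq0.
have m0_le : (m0 <= (T %/ 2).+1)%N by rewrite ltnW // ltnS leq_divRL // mulnC.
split.
- have mE : measurable (above_thresholds p lt T).
    by case: model => mp _ _ _; exact: measurable_above_thresholds.
  apply: le_trans (@mul_measure_le_integral _ _ _ P _ _ (b * (T - T %/ 2)%:R) mE _ _ _).
  + rewrite /bound half_T EFinM; apply: lee_wpmul2l.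
      by rewrite lee_fin mulr_ge0 // ltW.
    exact: probability_above_thresholds_ge model G1 GL (ltW L0) lt01 sum_C (ltW C1).
  + by rewrite mulr_ge0 // ltW.
  + by move=> w; apply: regret_ge0; exact: ltW.
  + move=> w /= E_w; apply: regret_above_thresholds wct lt0 (ltW a0) _.
    by move=> t tT; have := E_w t tT; rewrite /= in_itv.
- have C_tail : (1 - C) / 2 <= (1 - C) * tail_prod L lt (T %/ 2).+1.
    by apply: ler_wpM2l; [rewrite subr_ge0 ltW | have := tail_half _ m0_le; lra].
  have bT0 : 0 <= b * T%:R by rewrite mulr_ge0 // ltW.
  rewrite /bound; nra.
Qed.
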